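(* Fix a $C^0$-concept over $\mathbb{K}$. Let $E,F\in\mathcal{M}$, $U\subseteq E$ open and $f\colon U\to F$ of class $C^2$. Then for all $v,w\in E$, $\partial_v\partial_wf=\partial_w\partial_vf$ on $U$.
   Context: Let $\mathbb{K}$ be a commutative ring with unit carrying a topology. A $C^0$-concept over $\mathbb{K}$ consists of: (a) a class $\mathcal{M}$ of topologized $\mathbb{K}$-modules with $\mathbb{K}\in\mathcal{M}$; (b) for $E,F\in\mathcal{M}$ and open $U\subseteq E$, a set $C^0(U,F)$ of continuous maps; (c) for $E_1,E_2\in\mathcal{M}$ a topology on $E_1\times E_2$ (not necessarily the product topology) making it a member of $\mathcal{M}$; subject to: (I.1) composites of $C^0$-maps are $C^0$, identities and inclusions of open subsets are $C^0$; (I.2) $x\mapsto rx+b$ is $C^0$; (I.3) $t\mapsto tv+x$ is $C^0$; (I.4) $\mathbb{K}^\times$ is open and inversion is $C^0$; (I.5) $C^0$ is local on open covers; (II.1) projections and $v\mapsto(v,y)$, $w\mapsto(x,w)$ are $C^0$; (II.2) $f_1\times f_2$ is $C^0$ for $C^0$-maps $f_i$; (II.3) diagonals are $C^0$; (II.4) exchange/associativity maps of products are $C^0$ both ways; (II.5) addition and scalar multiplication are $C^0$; (III) a $C^0$-map on open $U\subseteq\mathbb{K}$ is determined by its values on $U\cap\mathbb{K}^\times$. For open $V\subseteq X$, $V^{[1]}=\{(x,v,t)\in V\times X\times\mathbb{K}:x+tv\in V\}$; a $C^0$-map $g$ is $C^1$ if there is a $C^0$-map $g^{[1]}$ on $V^{[1]}$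 with $g(x+tv)-g(x)=t\,g^{[1]}(x,v,t)$; $g$ is $C^2$ if moreover $g^{[1]}$ is $C^1$. For $g$ of class $C^1$, $\partial_vg(x):=g^{[1]}(x,v,0)$; if $g$ is $C^2$, then $\partial_wg=g^{[1]}(\cdot,w,0)$ is $C^1$, so $\partial_v\partial_wg$ is defined. *)

From HB Require Import structures.
From mathcomp Require Import all_boot all_order all_algebra.
From mathcomp Require Import boolp classical_sets.
Set Implicit Arguments.
Unset Strict Implicit.
Unset Printing Implicit Defensive.
Import GRing.Theory.
Local Open Scope ring_scope.
Local Open Scope classical_set_scope.

Definition is_topology (T : Type) (op : set T -> Prop) : Prop :=
  [/\ op setT, op set0,
      (forall A B, op A -> op B -> op (A `&` B)) &
      (forall (I : Type) (F : I -> set T), (forall i, op (F i)) ->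
         op (\bigcup_(i in setT) F i))].

Definition cont_on (T S : Type) (opT : set T -> Prop) (opS : set S -> Prop)
  (U : set T) (f : T -> S) : Prop :=
  forall W, opS W -> opT (U `&` f @^-1` W).

Record tmod (K : comUnitRingType) := TMod {
  tcar :> lmodType K;
  topen : set tcar -> Prop }.

Definition Kmod (K : comUnitRingType) (Kopen : set K -> Prop) : tmod K :=
  @TMod K K^o Kopen.

(* The product E1 x E2 (product module) with the topology chosen by the
   C^0-concept (not necessarily the product topology). *)
Definition pmod (K : comUnitRingType)
  (ptop : forall E1 E2 : tmod K, set (tcar E1 * tcar E2)%type -> Prop)
  (E1 E2 : tmod K) : tmod K :=
  @TMod K (tcar E1 * tcar E2)%type (ptop E1 E2).

(* Axioms of a C^0-concept over K.
   - M : the class of topologized modules;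
   - C0 E F U f : f (a total function E -> F, of which only the restriction
     to U matters) belongs to C^0(U,F);  U is required to be open.
   - ptop E1 E2 : the topology on E1 x E2. *)
Record C0_concept (K : comUnitRingType) (Kopen : set K -> Prop)
  (M : tmod K -> Prop)
  (C0 : forall E F : tmod K, set (tcar E) -> (tcar E -> tcar F) -> Prop)
  (ptop : forall E1 E2 : tmod K, set (tcar E1 * tcar E2)%type -> Prop) : Prop :=
{
  c_Ktop : is_topology Kopen;
  c_KM : M (Kmod Kopen);
  c_top : forall E, M E -> is_topology (@topen K E);
  c_prodM : forall E1 E2, M E1 -> M E2 -> M (pmod ptop E1 E2);
  c_open : forall E F U f, M E -> M F -> C0 E F U f -> topen U;
  c_cont : forall E F U f, M E -> M F -> C0 E F U f ->
             cont_on (@topen K E) (@topen K F) U f;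
  c_ext : forall E F U (f g : tcar E -> tcar F), M E -> M F -> C0 E F U f ->
             (forall x, U x -> f x = g x) -> C0 E F U g;
  c_comp : forall E F G U V f g, M E -> M F -> M G ->
             C0 E F U f -> C0 F G V g -> (forall x, U x -> V (f x)) ->
             C0 E G U (g \o f);
  c_id : forall E U, M E -> topen U -> C0 E E U id;
  c_affine : forall E (r : K) (b : tcar E), M E ->
             C0 E E setT (fun x => r *: x + b);
  c_line : forall E (v x : tcar E), M E ->
             C0 (Kmod Kopen) E setT (fun t : K => t *: v + x);
  c_units_open : Kopen [set t : K | t \is a GRing.unit];
  c_inv : C0 (Kmod Kopen) (Kmod Kopen) [set t : K | t \is a GRing.unit]
             (fun t : K => t^-1);
  c_local : forall E F U (f : tcar E -> tcar F) (I : Type) (Ui : I -> set (tcar E)),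
             M E -> M F -> topen U -> (forall i, topen (Ui i)) ->
             U = \bigcup_(i in setT) Ui i -> (forall i, C0 E F (Ui i) f) ->
             C0 E F U f;
  c_fst : forall E1 E2, M E1 -> M E2 ->
             C0 (pmod ptop E1 E2) E1 setT fst;
  c_snd : forall E1 E2, M E1 -> M E2 ->
             C0 (pmod ptop E1 E2) E2 setT snd;
  c_inl : forall E1 E2 (y : tcar E2), M E1 -> M E2 ->
             C0 E1 (pmod ptop E1 E2) setT (fun v => (v, y));
  c_inr : forall E1 E2 (x : tcar E1), M E1 -> M E2 ->
             C0 E2 (pmod ptop E1 E2) setT (fun w => (x, w));
  c_prodmap : forall E1 E2 F1 F2 U1 U2 f1 f2,
             M E1 -> M E2 -> M F1 -> M F2 ->
             C0 E1 F1 U1 f1 -> C0 E2 F2 U2 f2 ->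
             C0 (pmod ptop E1 E2) (pmod ptop F1 F2)
                [set p | U1 p.1 /\ U2 p.2] (fun p => (f1 p.1, f2 p.2));
  c_diag : forall E, M E -> C0 E (pmod ptop E E) setT (fun x => (x, x));
  c_swap : forall E1 E2, M E1 -> M E2 ->
             C0 (pmod ptop E1 E2) (pmod ptop E2 E1) setT (fun p => (p.2, p.1));
  c_assoc : forall E1 E2 E3, M E1 -> M E2 -> M E3 ->
             C0 (pmod ptop (pmod ptop E1 E2) E3) (pmod ptop E1 (pmod ptop E2 E3))
                setT (fun p => (p.1.1, (p.1.2, p.2)));
  c_assocV : forall E1 E2 E3, M E1 -> M E2 -> M E3 ->
             C0 (pmod ptop E1 (pmod ptop E2 E3)) (pmod ptop (pmod ptop E1 E2) E3)
                setT (fun p => ((p.1, p.2.1), p.2.2));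
  c_add : forall E, M E ->
             C0 (pmod ptop E E) E setT (fun p => p.1 + p.2);
  c_scale : forall E, M E ->
             C0 (pmod ptop (Kmod Kopen) E) E setT (fun p => (p.1 : K) *: p.2);
  c_dense : forall F U (f g : K -> tcar F), M F -> Kopen U ->
             C0 (Kmod Kopen) F U f -> C0 (Kmod Kopen) F U g ->
             (forall t, U t -> t \is a GRing.unit -> f t = g t) ->
             forall t, U t -> f t = g t
}.

Unset Implicit Arguments.

(* X x X x K, with triples (x,v,t) encoded as ((x,v),t) *)
Definition XXK (K : comUnitRingType) (Kopen : set K -> Prop)
  (ptop : forall E1 E2 : tmod K, set (tcar E1 * tcar E2)%type -> Prop)
  (X : tmod K) : tmod K :=
  pmod ptop (pmod ptop X X) (Kmod Kopen).

Definition V1 (K : comUnitRingType) (Kopen : set K -> Prop)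
  (ptop : forall E1 E2 : tmod K, set (tcar E1 * tcar E2)%type -> Prop)
  (X : tmod K) (V : set (tcar X)) : set (tcar (XXK K Kopen ptop X)) :=
  [set p | V p.1.1 /\ V (p.1.1 + (p.2 : K) *: p.1.2)].

Definition is_dq (K : comUnitRingType) (Kopen : set K -> Prop)
  (C0 : forall E F : tmod K, set (tcar E) -> (tcar E -> tcar F) -> Prop)
  (ptop : forall E1 E2 : tmod K, set (tcar E1 * tcar E2)%type -> Prop)
  (X F : tmod K) (V : set (tcar X)) (g : tcar X -> tcar F)
  (g1 : tcar (XXK K Kopen ptop X) -> tcar F) : Prop :=
  C0 (XXK K Kopen ptop X) F (V1 K Kopen ptop X V) g1 /\
  forall p : tcar (XXK K Kopen ptop X), V1 K Kopen ptop X V p ->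
    g (p.1.1 + (p.2 : K) *: p.1.2) - g p.1.1 = (p.2 : K) *: g1 p.

Definition is_C1 (K : comUnitRingType) (Kopen : set K -> Prop)
  (C0 : forall E F : tmod K, set (tcar E) -> (tcar E -> tcar F) -> Prop)
  (ptop : forall E1 E2 : tmod K, set (tcar E1 * tcar E2)%type -> Prop)
  (X F : tmod K) (V : set (tcar X)) (g : tcar X -> tcar F) : Prop :=
  C0 X F V g /\ exists g1, is_dq K Kopen C0 ptop X F V g g1.

Definition pder (K : comUnitRingType) (Kopen : set K -> Prop)
  (ptop : forall E1 E2 : tmod K, set (tcar E1 * tcar E2)%type -> Prop)
  (X F : tmod K) (g1 : tcar (XXK K Kopen ptop X) -> tcar F) (v : tcar X) :
  tcar X -> tcar F := fun x => g1 ((x, v), (0 : K)).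

From HB Require Import structures.
From mathcomp Require Import all_boot all_order all_algebra.
From mathcomp Require Import boolp classical_sets.
Import GRing.Theory.
Local Open Scope ring_scope.
Local Open Scope classical_set_scope.

(* For units s and t, multiplying either [f^[1]^[1]((x, v, s), (w, 0, 0), t)]
   or [f^[1]^[1]((x, w, t), (v, 0, 0), s)] by [s t] gives the second difference
   [f (x + s v + t w) - f (x + s v) - f (x + t w) + f x], so the two agree
   whenever s and t are units.  Axiom (III), applied along lines in K first in
   t and then in s, extends this symmetry to s = t = 0; by (III) again, the
   values at 0 are [d_v d_w f x] and [d_w d_v f x]. *)

Lemma subrACA (V : zmodType) (a b c d : V) : a - c - (b - d) = a - b - (c - d).
Proof. by rewrite !opprB [d - b]addrC [d - c]addrC addrACA. Qed.

Lemma scaler_unit_inj (R : comUnitRingType) (V : lmodType R) (k : R) (u v : V) :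
  k \is a GRing.unit -> k *: u = k *: v -> u = v.
Proof.
move=> Uk kuv.
by rewrite -[u]scale1r -(mulVr Uk) -scalerA kuv scalerA mulVr // scale1r.
Qed.

Lemma scaler_pair (R : comUnitRingType) (V W : lmodType R) (k : R)
    (a : V) (b : W) :
  k *: ((a, b) : (V * W)%type) = (k *: a, k *: b).
Proof. by []. Qed.

Lemma addr_pair (R : comUnitRingType) (V W : lmodType R) (a a' : V) (b b' : W) :
  ((a, b) : (V * W)%type) + (a', b') = (a + a', b + b').
Proof. by []. Qed.

Lemma scaler_regular (R : comUnitRingType) (k a : R) : k *: (a : R^o) = k * a.
Proof. by []. Qed.

Ltac pair_simpl := rewrite /= ?scaler_pair ?addr_pair ?scaler_regular
  ?mulr1 ?mulr0 ?scaler0 ?scale0r ?addr0 ?add0r.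

Section C0Concept.

Context {K : comUnitRingType} {Kopen : set K -> Prop} {M : tmod K -> Prop}
  {C0 : forall E F : tmod K, set (tcar E) -> (tcar E -> tcar F) -> Prop}
  {ptop : forall E1 E2 : tmod K, set (tcar E1 * tcar E2)%type -> Prop}
  (HC : C0_concept Kopen M C0 ptop).

Local Notation KK := (Kmod Kopen).

Lemma Kopen_setI (A B : set K) : Kopen A -> Kopen B -> Kopen (A `&` B).
Proof. by case: (c_Ktop HC) => _ _ + _; apply. Qed.

Lemma Kopen_line_preimage {X : tmod K} {V : set X} (p e : X) :
  M X -> topen V -> Kopen [set t : K | V (p + t *: e)].
Proof.
move=> MX HV; have := c_cont HC (c_KM HC) MX (c_line HC e p MX) HV.
by rewrite setTI; congr Kopen; apply/seteqP; split=> t /=; rewrite addrC.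
Qed.

Lemma M_XXK {X : tmod K} : M X -> M (XXK K Kopen ptop X).
Proof. by move=> MX; exact: (c_prodM HC (c_prodM HC MX MX) (c_KM HC)). Qed.

Lemma C0_on_line {X Y : tmod K} {V : set X} {g : X -> Y} (p e : X)
    {D : set K} {phi : K -> Y} :
  M X -> M Y -> C0 X Y V g -> Kopen D ->
  (forall t, D t -> V (p + t *: e) /\ phi t = g (p + t *: e)) ->
  C0 KK Y D phi.
Proof.
move=> MX MY Cg HD Dphi; have MK := c_KM HC.
have Cline : C0 KK X D (fun t : K => t *: e + p).
  exact: (c_comp HC MK MK MX (c_id HC MK HD) (c_line HC e p MX) (fun _ _ => I)).
have DV t : D t -> V (t *: e + p) by move=> /Dphi[]; rewrite addrC.
apply: (c_ext HC MK MY (c_comp HC MK MX MY Cline Cg DV)) => t /Dphi[_ ->].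
by rewrite /= addrC.
Qed.

Lemma C0_eq_of_units {Y : tmod K} {D : set K} {phi psi : K -> Y} :
  M Y -> Kopen D -> C0 KK Y D phi -> C0 KK Y D psi ->
  (forall t, D t -> t \is a GRing.unit -> t *: phi t = t *: psi t) ->
  forall t, D t -> phi t = psi t.
Proof.
move=> MY HD Cphi Cpsi eq_units; apply: (c_dense HC MY HD Cphi Cpsi).
by move=> t Dt Ut; apply: scaler_unit_inj Ut (eq_units t Dt Ut).
Qed.

Section SecondDifferenceQuotient.

Context {E F : tmod K} {U : set E} {f : E -> F}
  {f1 : XXK K Kopen ptop E -> F}
  {f11 : XXK K Kopen ptop (XXK K Kopen ptop E) -> F}
  (ME : M E) (MF : M F) (HU : topen U)
  (Hf1 : is_dq K Kopen C0 ptop E F U f f1)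
  (Hf11 : is_dq K Kopen C0 ptop (XXK K Kopen ptop E) F
            (V1 K Kopen ptop E U) f1 f11).

Let MXXE : M (XXK K Kopen ptop (XXK K Kopen ptop E)) := M_XXK (M_XXK ME).

(* The difference quotient of [f1] in the direction [(w, 0, 0)]:
   [t *: d2f x v w s t = f1 (x + t w, v, s) - f1 (x, v, s)]. *)
Local Notation d2f x v w s t := (f11 ((((x, v), s), ((w, 0), 0)), t)).

Lemma d2f_step x v w s t :
  U x -> U (x + s *: v) -> U (x + t *: w) -> U (x + t *: w + s *: v) ->
  f1 ((x + t *: w, v), s) - f1 ((x, v), s) = t *: d2f x v w s t.
Proof.
move=> Ux Usv Utw Ustw; have := Hf11.2 ((((x, v), s), ((w, 0), 0)), t).
by pair_simpl; apply; split; split; pair_simpl.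
Qed.

Lemma d2f_sym_units x v w s t :
  s \is a GRing.unit -> t \is a GRing.unit ->
  U x -> U (x + s *: v) -> U (x + t *: w) -> U (x + s *: v + t *: w) ->
  d2f x v w s t = d2f x w v t s.
Proof.
move=> Us Ut Ux Usv Utw Ustw.
have Utsw : U (x + t *: w + s *: v) by rewrite addrAC.
apply: (@scaler_unit_inj _ _ (s * t)); first by rewrite unitrM Us Ut.
rewrite -scalerA [s * t]mulrC -scalerA -d2f_step // -d2f_step // !scalerBr.
have dq_f y u r :
    U y -> U (y + r *: u) -> r *: f1 ((y, u), r) = f (y + r *: u) - f y.
  by move=> Uy Uyu; rewrite (Hf1.2 ((y, u), r)).
by rewrite !dq_f // (addrAC x) subrACA.
Qed.

Lemma C0_d2f_last x v w s (D : set K) :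
  U x -> U (x + s *: v) -> Kopen D ->
  (forall t, D t -> U (x + t *: w) /\ U (x + t *: w + s *: v)) ->
  C0 KK F D (fun t => d2f x v w s t).
Proof.
move=> Ux Usv HD DU.
apply: (C0_on_line (g := f11) ((((x, v), s), ((w, 0), 0)), 0) (0, 1)
          MXXE MF Hf11.1 HD).
by move=> t /DU[Utw Utsw]; pair_simpl; do !split; pair_simpl.
Qed.

Lemma C0_d2f_mid x v w t (D : set K) :
  U x -> U (x + t *: w) -> Kopen D ->
  (forall s, D s -> U (x + s *: v) /\ U (x + t *: w + s *: v)) ->
  C0 KK F D (fun s => d2f x v w s t).
Proof.
move=> Ux Utw HD DU.
apply: (C0_on_line (g := f11) ((((x, v), 0), ((w, 0), 0)), t)
          ((((0, 0), 1), 0), 0) MXXE MF Hf11.1 HD).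
by move=> s /DU[Usv Utsv]; pair_simpl; do !split; pair_simpl.
Qed.

Lemma d2f_sym x v w s t :
  U x -> U (x + s *: v) -> U (x + t *: w) -> U (x + s *: v + t *: w) ->
  d2f x v w s t = d2f x w v t s.
Proof.
move=> Ux.
have sym_unit_s s' t' : s' \is a GRing.unit -> U (x + s' *: v) ->
    U (x + t' *: w) -> U (x + s' *: v + t' *: w) ->
    d2f x v w s' t' = d2f x w v t' s'.
  move=> Us Usv Utw Ustw.
  pose D := [set r | U (x + r *: w)] `&` [set r | U (x + s' *: v + r *: w)].
  have HD : Kopen D.
    by apply: Kopen_setI; exact: (Kopen_line_preimage _ _ ME HU).
  have C0l : C0 KK F D (fun r => d2f x v w s' r).
    by apply: C0_d2f_last => // r [Urw Ursw]; rewrite addrAC.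
  have C0r : C0 KK F D (fun r => d2f x w v r s') by apply: C0_d2f_mid.
  apply: (c_dense HC MF HD C0l C0r) => [r [Urw Ursw] Ur|]; last by split.
  exact: d2f_sym_units.
move=> Usv Utw Ustw.
pose D := [set r | U (x + r *: v)] `&` [set r | U (x + t *: w + r *: v)].
have HD : Kopen D.
  by apply: Kopen_setI; exact: (Kopen_line_preimage _ _ ME HU).
have C0l : C0 KK F D (fun r => d2f x v w r t) by apply: C0_d2f_mid.
have C0r : C0 KK F D (fun r => d2f x w v t r).
  by apply: C0_d2f_last => // r [Urv Urtv]; rewrite addrAC.
apply: (c_dense HC MF HD C0l C0r) => [r [Urv Urtv] Ur|]; last first.
  by split=> //=; rewrite addrAC.
by apply: (sym_unit_s r t Ur Urv Utw); rewrite addrAC.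
Qed.

Lemma pder_dq_at0 (w : E) (h : XXK K Kopen ptop E -> F) :
  is_dq K Kopen C0 ptop E F U (pder K Kopen ptop E F f1 w) h ->
  forall x v, U x -> h ((x, v), 0) = d2f x w v 0 0.
Proof.
move=> [C0h dq_h] x v Ux.
have Uxw : U (x + 0 *: w) by rewrite scale0r addr0.
pose D := [set r | U (x + r *: v)].
have HD : Kopen D := Kopen_line_preimage _ _ ME HU.
have C0l : C0 KK F D (fun r => h ((x, v), r)).
  apply: (C0_on_line (g := h) ((x, v), 0) ((0, 0), 1) (M_XXK ME) MF C0h HD).
  by move=> r Urv; pair_simpl.
have C0r : C0 KK F D (fun r => d2f x w v 0 r).
  by apply: C0_d2f_last => // r Urv; pair_simpl.
apply: (C0_eq_of_units MF HD C0l C0r) => [r Urv Ur|]; last first.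
  by rewrite /D /= scale0r addr0.
rewrite -(dq_h ((x, v), r)) /pder; last by split.
by rewrite -d2f_step //; pair_simpl.
Qed.

End SecondDifferenceQuotient.
End C0Concept.

Theorem lemma4p6 (K : comUnitRingType) (Kopen : set K -> Prop)
  (M : tmod K -> Prop)
  (C0 : forall E F : tmod K, set (tcar E) -> (tcar E -> tcar F) -> Prop)
  (ptop : forall E1 E2 : tmod K, set (tcar E1 * tcar E2)%type -> Prop)
  (HC : C0_concept Kopen M C0 ptop)
  (E F : tmod K) (HE : M E) (HF : M F)
  (U : set (tcar E)) (HU : topen U)
  (f : tcar E -> tcar F) (f1 : tcar (XXK K Kopen ptop E) -> tcar F)
  (Hf : C0 E F U f)
  (Hf1 : is_dq K Kopen C0 ptop E F U f f1)
  (Hf1C1 : is_C1 K Kopen C0 ptop (XXK K Kopen ptop E) F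
             (V1 K Kopen ptop E U) f1)
  (v w : tcar E) (hv hw : tcar (XXK K Kopen ptop E) -> tcar F)
  (Hhv : is_dq K Kopen C0 ptop E F U (pder K Kopen ptop E F f1 v) hv)
  (Hhw : is_dq K Kopen C0 ptop E F U (pder K Kopen ptop E F f1 w) hw) :
  forall x, U x ->
    pder K Kopen ptop E F hw v x = pder K Kopen ptop E F hv w x.
Proof.
move=> x Ux; case: Hf1C1 => _ [f11 Hf11].
rewrite /pder (pder_dq_at0 HC HE HF HU Hf11 _ _ Hhw _ _ Ux).
rewrite (pder_dq_at0 HC HE HF HU Hf11 _ _ Hhv _ _ Ux).
by apply: (d2f_sym HC HE HF HU Hf1 Hf11); rewrite ?scale0r ?addr0.
Qed.
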